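(* Let $[G,f,\cdot]$ be an MC system on a finite graph $G$ with vertex set $\{1,\ldots,n\}$ and finite linearly ordered state set $P$, and let $x\in P^n$. Then for any two fair update schedules $W$ and $W'$, the state $x$ reaches a fixed point under $[G,f,W]$ and under $[G,f,W']$, and these two fixed points coincide; call it $z$. Moreover, every state $y\in P^n$ with $z\le y\le x$ reaches the fixed point $z$ (under any fair update schedule).
   Context: Let $G=(V,E)$ be a finite graph with $V=\{1,\ldots,n\}$, and let $P$ be a finite set with a linear order $\le$. Each vertex $i$ has a state $x_i\in P$ and a local function $f_i$ which takes as arguments the states of $i$ and of its neighbors $k_1,\ldots,k_{d_i}$ and returns a new state of $i$. An infinite sequence $W=W_1W_2\cdots$ of subsets $W_j\subseteq V$ is a fair update schedule if for every $k\ge1$ and every vertex $i$ there exists $l>k$ with $i\in W_l$. Given an initial state $x^{(0)}=x\in P^n$, the state $x^{(j)}$ at time $j>0$ is obtained from $x^{(j-1)}$ by letting every vertex $i\in W_j$ take the new state $f_i$ applied to the states (in $x^{(j-1)}$) of $i$ and its neighbors, while vertices not in $W_j$ keep their states; write $[G,f,W]^{(j)}(x)=x^{(j)}$. A state $x$ reaches a fixed point $z$ under $[G,f,W]$ if there is $k\ge0$ with $[G,f,W]^{(j)}(x)=[G,f,W]^{(k)}(x)=z$ for all $j>k$. $P^q$ carries the product partial order: $(x_1,\ldots,x_q)\le(y_1,\ldots,y_q)$ iff $x_j\le y_j$ for all $j$. A function $g\colon P^q\to P$ is monotone if $x\le y$ implies $g(x)\le g(y)$. A local function $f_i\colon(x_i,x_{k_1},\ldots,x_{k_{d_i}})\mapsto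 x_i'$ is contractive if $x_i'\le x_i$ for every argument. The system is an MC (monotone-contractive) system if every local function is monotone and contractive. *)

From HB Require Import structures.
From mathcomp Require Import all_boot all_order.
Set Implicit Arguments. Unset Strict Implicit. Unset Printing Implicit Defensive.
Import Order.TTheory.
Local Open Scope order_scope.

Section MC.
Variables (n : nat) (d : Order.disp_t) (P : finOrderType d).

Definition state := {ffun 'I_n -> P}.

Definition sle (x y : state) : Prop := forall j, x j <= y j.

Definition simple_graph (E : rel 'I_n) : Prop :=
  (forall i j, E i j = E j i) /\ (forall i, ~~ E i i).

Definition closed_nbr (E : rel 'I_n) (i j : 'I_n) : bool := (j == i) || E i j.

(* f i x is the local function of vertex i applied to the global state;
   monotonicity in the arguments (x_i, x_{k_1}, ..., x_{k_d}) only: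
   if x <= y on the closed neighbourhood of i then f i x <= f i y.
   (In particular f i depends only on the closed neighbourhood.) *)
Definition local_monotone (E : rel 'I_n) (f : 'I_n -> state -> P) : Prop :=
  forall i (x y : state),
    (forall j, closed_nbr E i j -> x j <= y j) -> f i x <= f i y.

Definition contractive (f : 'I_n -> state -> P) : Prop :=
  forall i (x : state), f i x <= x i.

Definition MC_system (E : rel 'I_n) (f : 'I_n -> state -> P) : Prop :=
  local_monotone E f /\ contractive f.

(* update schedule W_1 W_2 ... ; the value W 0 is irrelevant *)
Definition fair (W : nat -> {set 'I_n}) : Prop :=
  forall k, 1 <= k -> forall i, exists l, (k < l)%N /\ i \in W l.

Definition step (f : 'I_n -> state -> P) (S : {set 'I_n}) (x : state) : state :=
  [ffun i => if i \in S then f i x else x i].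

Fixpoint traj (f : 'I_n -> state -> P) (W : nat -> {set 'I_n}) (j : nat)
  (x : state) : state :=
  match j with
  | 0 => x
  | j'.+1 => step f (W j) (traj f W j' x)
  end.

Definition reaches (f : 'I_n -> state -> P) (W : nat -> {set 'I_n})
  (x z : state) : Prop :=
  exists k, traj f W k x = z /\ forall j, (k < j)%N -> traj f W j x = z.

End MC.

From mathcomp Require Import all_boot all_order.
From Stdlib Require Import Classical.
Set Implicit Arguments. Unset Strict Implicit. Unset Printing Implicit Defensive.
Import Order.TTheory.

(* Proof strategy.
   1. Contractivity makes every trajectory antitone in the product order, and
      an antitone sequence in the finite poset P^n is eventually constant
      (the number of states below the current one strictly drops at every
      proper decrease).  Hence every trajectory stabilizes.
   2. Under a fair schedule, every vertex is updated after the stabilization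
      time, so the limit state is a fixed point of all the local functions.
   3. Monotonicity makes fixed points lower barriers: a fixed point u with
      u <= y stays below every trajectory started at y.
   The theorem follows: let z be the limit of x under the synchronous schedule.
   For y with z <= y <= x and a fair W, the limit z' of y under W satisfies
   z <= z' (z is a barrier below y) and z' <= z (z' is a fixed point below x,
   hence below the synchronous trajectory of x), so z' = z. *)

Section MCDynamics.
Variables (n : nat) (d : Order.disp_t) (P : finOrderType d).

Local Notation state := (state n P).

Lemma sle_anti (x y : state) : sle x y -> sle y x -> x = y.
Proof. by move=> xy yx; apply/ffunP => j; apply: le_anti; rewrite xy yx. Qed.

Lemma sle_trans (x y z : state) : sle x y -> sle y z -> sle x z.
Proof. by move=> xy yz j; apply: le_trans (xy j) (yz j). Qed.

(* The finite set of states below x; its size measures strict descent. *)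
Definition down_set (x : state) : {set state} :=
  [set y : state | [forall j, (y j <= x j)%O]].

Lemma card_down_set_gt0 (x : state) : 0 < #|down_set x|.
Proof. by apply/card_gt0P; exists x; rewrite inE; apply/forallP. Qed.

Lemma card_down_set_lt (x y : state) :
  sle y x -> y != x -> #|down_set y| < #|down_set x|.
Proof.
move=> yx y_neq_x; apply/proper_card/properP; split.
  apply/subsetP => u; rewrite !inE => /forallP uy; apply/forallP => j.
  exact: le_trans (uy j) (yx j).
exists x; first by rewrite inE; apply/forallP.
rewrite inE; apply/forallP => xy; move/eqP: y_neq_x; apply.
exact: sle_anti.
Qed.

Definition antitone (s : nat -> state) : Prop := forall j, sle (s j.+1) (s j).

Lemma antitone_le (s : nat -> state) :
  antitone s -> forall j k, j <= k -> sle (s k) (s j).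
Proof.
move=> s_anti j k /subnKC <-; elim: (k - j) => [|m IH]; first by rewrite addn0.
by rewrite addnS; apply: sle_trans (s_anti _) IH.
Qed.

Lemma antitone_stabilizes (s : nat -> state) :
  antitone s -> exists k, forall j, k <= j -> s j = s k.
Proof.
move=> s_anti.
suff bounded : forall N j0, #|down_set (s j0)| <= N ->
    exists k, forall j, k <= j -> s j = s k by exact: (bounded _ 0).
elim=> [|N IH] j0 bound_j0.
  by move: (card_down_set_gt0 (s j0)); rewrite lt0n -leqn0 bound_j0.
have [const_from_j0 | not_const] :=
  classic (forall j, j0 <= j -> s j = s j0); first by exists j0.
have [j leaves_s_j0] := not_all_ex_not _ _ not_const.
have [j0_le_j s_neq] := imply_to_and _ _ leaves_s_j0.
apply: (IH j); rewrite -ltnS; apply: leq_trans bound_j0.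
apply: card_down_set_lt; first exact: antitone_le.
exact/eqP.
Qed.

Variable f : 'I_n -> state -> P.

Definition fixed_point (u : state) : Prop := forall i, f i u = u i.

Section Contractive.
Hypothesis f_contr : contractive f.

Lemma traj_antitone (W : nat -> {set 'I_n}) (x : state) :
  antitone (fun j => traj f W j x).
Proof. by move=> j i /=; rewrite ffunE; case: ifP => // _; apply: f_contr. Qed.

Lemma traj_le_init (W : nat -> {set 'I_n}) (x : state) j :
  sle (traj f W j x) x.
Proof. exact: (antitone_le (traj_antitone W x) (leq0n j)). Qed.

Lemma reaches_fixed_point (W : nat -> {set 'I_n}) (x : state) :
  fair W -> exists z, reaches f W x z /\ fixed_point z.
Proof.
move=> W_fair; have [k stable] := antitone_stabilizes (traj_antitone W x).
exists (traj f W k x); split.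
  by exists k; split => // j /ltnW; apply: stable.
(* Vertex i is updated at some time l.+1 > k, where the state is stable. *)
move=> i; have [[|l] [] //] := W_fair k.+1 isT i => lt_k_l i_in_W.
rewrite -[in RHS](stable l.+1 (ltnW (ltnW lt_k_l))) /= ffunE i_in_W.
by rewrite (stable l (ltnW lt_k_l)).
Qed.
End Contractive.

Lemma fixed_point_below_traj (E : rel 'I_n) (W : nat -> {set 'I_n}) (u y : state) :
  local_monotone E f -> fixed_point u -> sle u y ->
  forall j, sle u (traj f W j y).
Proof.
move=> f_mono u_fixed uy; elim=> [|j IH] //= i; rewrite ffunE.
by case: ifP => // _; rewrite -u_fixed; apply: f_mono => k _; apply: IH.
Qed.

End MCDynamics.

Theorem theorem2 (n : nat) (d : Order.disp_t) (P : finOrderType d)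
  (E : rel 'I_n) (f : 'I_n -> state n P -> P) :
  simple_graph E -> MC_system E f ->
  forall x : state n P,
  exists z : state n P,
    (forall W : nat -> {set 'I_n}, fair W -> reaches f W x z) /\
    (forall y : state n P, sle z y -> sle y x ->
       forall W : nat -> {set 'I_n}, fair W -> reaches f W y z).
Proof.
move=> _ [f_mono f_contr] x.
pose sync := fun _ : nat => [set: 'I_n].
have sync_fair : fair sync by move=> k _ i; exists k.+1; rewrite ltnSn in_setT.
have [z [[k0 [z_def _]] z_fixed]] := reaches_fixed_point f_contr x sync_fair.
have z_le_x : sle z x by rewrite -z_def; apply: traj_le_init.
suff interval : forall y, sle z y -> sle y x ->
    forall W, fair W -> reaches f W y z.
  by exists z; split=> // W; apply: interval.
move=> y z_le_y y_le_x W W_fair.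
have [z' [reach_z' z'_fixed]] := reaches_fixed_point f_contr y W_fair.
have [k [z'_def _]] := reach_z'.
suff -> : z = z' by [].
apply: sle_anti.
- by rewrite -z'_def; apply: (fixed_point_below_traj _ f_mono).
- rewrite -z_def; apply: (fixed_point_below_traj _ f_mono) => //.
  by apply: sle_trans y_le_x; rewrite -z'_def; apply: traj_le_init.
Qed.
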